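(* Assume $0<A,B\le1$ and $B\ge B_0(A)$. Put $C=2+AB-A^2$, $\sigma=\sqrt{2(1+AB)}$, $x_*=\frac{\sigma}{2BC}$ and $U_*=P-x_*$. Then $U_*\ge\frac12$, and if $U_*<R(A,B)$ then $G_{A,B}(U_* )\ge 0$.
   Context: For $0<A,B\le1$ put $\kappa=\sqrt{1-A^2}$, $\varepsilon=\sqrt{1-B^2}$, $P=P(A,B)=\frac{1+AB}{B(A+B)}$, $M(U)=\kappa(P-U)$, $N(U)=\varepsilon\left(U+\frac{\kappa^2}{A(A+B)}\right)$, and $G_{A,B}(U)=B\cos(\pi M(U))-A\cos(\pi N(U))-(A+B)\cos(\pi U)$. Further $R(A,B)=\frac{1-\varepsilon\kappa^2/[A(A+B)]}{1+\varepsilon}$ and $B_0(A)=\frac{-A(1-\kappa)+\sqrt{A^2(1-\kappa)^2+8\kappa(1+\kappa)}}{2(1+\kappa)}$. *)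

From Stdlib Require Import Reals.
Open Scope R_scope.

Definition kappa (A : R) : R := sqrt (1 - A^2).
Definition eps (B : R) : R := sqrt (1 - B^2).
Definition Pf (A B : R) : R := (1 + A*B) / (B * (A + B)).
Definition Mf (A B U : R) : R := kappa A * (Pf A B - U).
Definition Nf (A B U : R) : R := eps B * (U + (kappa A)^2 / (A * (A + B))).
Definition G (A B U : R) : R :=
  B * cos (PI * Mf A B U) - A * cos (PI * Nf A B U) - (A + B) * cos (PI * U).
Definition Rf (A B : R) : R :=
  (1 - eps B * (kappa A)^2 / (A * (A + B))) / (1 + eps B).
Definition B0 (A : R) : R :=
  (- A * (1 - kappa A) + sqrt (A^2 * (1 - kappa A)^2 + 8 * kappa A * (1 + kappa A)))
  / (2 * (1 + kappa A)).

(* Put C = 2 + AB - A^2 and D = 2 + AB - B^2 (these are [Cf A B] and [Cf B A] below),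
   k = kappa A, s = sigma, u = U_* - 1/2 and m = M(U_* ) = k x_*.  Then
   4BC(A+B) u = 2CD - 2s(A+B), so U_* >= 1/2 follows from 2s <= 3 + AB (AM-GM) and the
   polynomial inequality (3+AB)(A+B) <= 2CD on the unit square.  The condition B >= B0(A)
   says exactly that kD <= B(A+B), which gives m <= 1/2.  Bounding cos(pi N) by 1 and
   cos(pi m), -cos(pi U_* ) = sin(pi u) by Taylor polynomials (with pi^2 <= 21/2) yields
   G(U_* ) >= B - A - 21/4 B m^2 + (A+B) sin(pi u).  With sin(pi u) >= 171/64 u for u <= 1/4
   and >= 43/64 beyond, the right-hand side becomes a rational function of A, B, s whose
   sign reduces to polynomial inequalities with nonnegative Bernstein coefficients on
   [0,1]^2.  The hypothesis U_* < R(A,B) is used only through U_* < 1, which forces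
   B >= 19/50. *)
From Stdlib Require Import Reals Lra Psatz.
Open Scope R_scope.

Lemma PI_sqr_le : PI^2 <= 21/2.
Proof.
  destruct (PI_2_3_7_ineq 0) as [_ H].
  unfold sum_f_R0, tg_alt, PI_2_3_7_tg, Ratan_seq in H; simpl in H.
  pose proof PI_RGT_0; nra.
Qed.

Lemma cos_ge_quadratic (a : R) : - (PI/2) <= a <= PI/2 -> 1 - a^2/2 <= cos a.
Proof.
  intros [Hl Hu]; destruct (cos_bound a 0) as [H _]; [lra | lra |].
  unfold cos_approx, cos_term in H; simpl in H; lra.
Qed.

Lemma sin_ge_cubic (a : R) : 0 <= a <= PI -> a - a^3/6 <= sin a.
Proof.
  intros [Hl Hu]; destruct (sin_bound a 0 Hl Hu) as [H _].
  unfold sin_approx, sin_term in H; simpl in H; lra.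
Qed.

Lemma sin_PI_mul_ge_linear (u : R) : 0 <= u <= 1/4 -> 171/64 * u <= sin (PI * u).
Proof.
  intros Hu; pose proof PI_sqr_le; pose proof PI2_3_2.
  assert (Hsin : PI*u - (PI*u)^3/6 <= sin (PI*u)) by (apply sin_ge_cubic; nra).
  assert (Hsq : (PI*u)^2 <= 21/32).
  { rewrite Rpow_mult_distr; assert (0 <= u^2 <= 1/16) by nra; nra. }
  assert (Hcube : (PI*u)^3 <= PI*u*(21/32)).
  { replace ((PI*u)^3) with (PI*u*(PI*u)^2) by ring.
    apply Rmult_le_compat_l; [apply Rmult_le_pos |]; lra. }
  nra.
Qed.

Lemma sin_PI_mul_ge_43_64 (u : R) : 1/4 <= u <= 1/2 -> 43/64 <= sin (PI * u).
Proof.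
  intros Hu; pose proof PI_sqr_le; pose proof PI2_3_2.
  rewrite <- cos_shift.
  replace (PI/2 - PI*u) with (PI*(1/2 - u)) by field.
  assert (Hcos : 1 - (PI*(1/2-u))^2/2 <= cos (PI*(1/2-u))) by (apply cos_ge_quadratic; nra).
  assert ((PI*(1/2-u))^2 <= 21/32).
  { rewrite Rpow_mult_distr; assert (0 <= (1/2-u)^2 <= 1/16) by nra; nra. }
  lra.
Qed.

Definition Cf (a b : R) : R := 2 + a*b - a^2.

Lemma bernstein_nonneg (x y : R) (i k j l : nat) :
  0 <= x <= 1 -> 0 <= y <= 1 -> 0 <= x^i * (1-x)^k * y^j * (1-y)^l.
Proof. intros Hx Hy; repeat apply Rmult_le_pos; apply pow_le; lra. Qed.

(* [bernstein Hx Hy m n] proves a polynomial inequality of bidegree at most (m, n) in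
   x, y whose Bernstein coefficients on [0,1]^2 are nonnegative. *)
Ltac bernstein_row Hx Hy i k j l :=
  pose proof (bernstein_nonneg _ _ i k j l Hx Hy);
  lazymatch j with O => idtac | S ?j' => bernstein_row Hx Hy i k j' (S l) end.
Ltac bernstein_rows Hx Hy i k n :=
  bernstein_row Hx Hy i k n O;
  lazymatch i with O => idtac | S ?i' => bernstein_rows Hx Hy i' (S k) n end.
Ltac bernstein Hx Hy m n := bernstein_rows Hx Hy m O n; lra.

Lemma Cf_mul_Cf_ge (x y : R) : 0 <= x <= 1 -> 0 <= y <= 1 ->
  (3 + x*y) * (x + y) <= 2 * Cf x y * Cf y x.
Proof. intros Hx Hy; unfold Cf; bernstein Hx Hy 3%nat 3%nat. Qed.

Lemma Cf_mul_one_sub_sqr_ge (x y : R) : 0 <= x <= 1 -> 0 <= y <= 19/50 ->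
  2 * (1 + x*y) * (x + y)^2 <= (2 * Cf x y * (1 - y^2))^2.
Proof.
  intros Hx Hy; assert (Ht : 0 <= 50/19*y <= 1) by lra.
  unfold Cf; replace y with (19/50 * (50/19*y)) by field.
  set (t := 50/19*y) in *; clearbody t; bernstein Hx Ht 4%nat 6%nat.
Qed.

Lemma G_minorant_near_half_poly (x y : R) : 0 <= x <= 1 -> 0 <= y <= 1 ->
  21/2 * (1 - x^2) * (1 + x*y) <=
  4 * y * Cf x y^2 * (y - x) + 171/64 * Cf x y * (2 * Cf x y * Cf y x - (3 + x*y) * (x + y)).
Proof. intros Hx Hy; unfold Cf; bernstein Hx Hy 5%nat 4%nat. Qed.

(* The term weighted by 13/10 is nonnegative when B >= B0 A: it is [kappa_mul_Cf_le] squared. *)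
Lemma G_minorant_far_poly (x y : R) : 0 <= x <= 1 -> 19/50 <= y <= 1 ->
  21/4 * (1 - x^2) * (1 + x*y) + 13/10 * (y^2 * (x + y)^2 - (1 - x^2) * Cf y x^2) <=
  2 * y * Cf x y^2 * (y - x + 43/64 * (x + y)).
Proof.
  intros Hx Hy; assert (Ht : 0 <= 50/31*(y - 19/50) <= 1) by lra.
  unfold Cf; replace y with (19/50 + 31/50 * (50/31*(y - 19/50))) by field.
  set (t := 50/31*(y - 19/50)) in *; clearbody t; bernstein Hx Ht 5%nat 4%nat.
Qed.

Definition sigma (A B : R) : R := sqrt (2 * (1 + A*B)).
Definition xstar (A B : R) : R := sigma A B / (2 * B * Cf A B).
Definition Ustar (A B : R) : R := Pf A B - xstar A B.

Lemma kappa_sqr (A : R) : A^2 <= 1 -> kappa A ^ 2 = 1 - A^2.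
Proof. intros HA; apply pow2_sqrt; lra. Qed.

(* B0 A is the nonnegative root of (1 + k) z^2 + A (1 - k) z - 2k, k = kappa A. *)
Lemma kappa_mul_Cf_le (A B : R) : 0 < A <= 1 -> 0 < B -> B0 A <= B ->
  kappa A * Cf B A <= B * (A + B).
Proof.
  intros HA HB HB0; unfold B0 in HB0; unfold Cf.
  pose proof (kappa_sqr A ltac:(nra)) as Hk2.
  set (k := kappa A) in *.
  assert (Hk0 : 0 <= k) by apply sqrt_pos.
  assert (Hk1 : k <= 1) by nra.
  set (d := sqrt _) in HB0.
  assert (Hd0 : 0 <= d) by apply sqrt_pos.
  assert (Hd2 : d^2 = A^2 * (1 - k)^2 + 8 * k * (1 + k)) by (apply pow2_sqrt; nra).
  assert (Hd : A * (1 - k) <= d) by (apply Rsqr_incr_0_var; unfold Rsqr; nra).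
  set (T := (- A * (1 - k) + d) / (2 * (1 + k))) in HB0.
  assert (HT : 0 <= T) by (apply Rmult_le_pos; [lra | left; apply Rinv_0_lt_compat; lra]).
  assert (Hroot : (1 + k) * T^2 + A * (1 - k) * T = 2 * k).
  { replace ((1 + k) * T^2 + A * (1 - k) * T) with ((d^2 - (A * (1 - k))^2) / (4 * (1 + k)))
      by (unfold T; field; lra).
    rewrite Hd2; field; lra. }
  assert (Hmono : 0 <= (B - T) * ((1 + k) * (B + T) + A * (1 - k))) by (apply Rmult_le_pos; nra).
  nra.
Qed.

Definition G_minorant (A B : R) : R :=
  B - A - 21/4 * (B * (kappa A * xstar A B)^2) + (A + B) * sin (PI * (Ustar A B - 1/2)).

Lemma nonneg_of_pos_mul (d x : R) : 0 < d -> 0 <= d * x -> 0 <= x.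
Proof. intros Hd Hdx; apply (Rmult_le_reg_l d); [exact Hd | now rewrite Rmult_0_r]. Qed.

Section Ustar.

Variables A B : R.
Hypothesis HA : 0 < A <= 1.
Hypothesis HB : 0 < B <= 1.

Let Cf_AB_ge_1 : 1 <= Cf A B.
Proof. unfold Cf; nra. Qed.

Let Cf_BA_ge_1 : 1 <= Cf B A.
Proof. unfold Cf; nra. Qed.

Let B_Cf_pos : 0 < B * Cf A B.
Proof. apply Rmult_lt_0_compat; lra. Qed.

Let sigma_sqr : sigma A B ^ 2 = 2 * (1 + A*B).
Proof. apply pow2_sqrt; nra. Qed.

Let sigma_nonneg : 0 <= sigma A B.
Proof. apply sqrt_pos. Qed.

Lemma two_sigma_le : 2 * sigma A B <= 3 + A*B.
Proof.
  pose proof (pow2_ge_0 (1 - A*B)).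
  apply Rsqr_incr_0_var; unfold Rsqr; nra.
Qed.

Lemma Ustar_sub_half_mul :
  4 * B * Cf A B * (A + B) * (Ustar A B - 1/2) = 2 * Cf A B * Cf B A - 2 * sigma A B * (A + B).
Proof. unfold Ustar, xstar, Pf, Cf in *; field; repeat split; nra. Qed.

Lemma Ustar_ge_half : 1/2 <= Ustar A B.
Proof.
  pose proof two_sigma_le; pose proof (Cf_mul_Cf_ge A B ltac:(lra) ltac:(lra)).
  enough (0 <= Ustar A B - 1/2) by lra.
  apply (nonneg_of_pos_mul (4 * B * Cf A B * (A + B))); [nra |].
  rewrite Ustar_sub_half_mul; nra.
Qed.

Lemma Rf_le_1 : Rf A B <= 1.
Proof.
  unfold Rf; set (e := eps B); assert (He : 0 <= e) by apply sqrt_pos.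
  assert (0 <= e * kappa A ^ 2 / (A * (A + B))).
  { apply Rmult_le_pos; [apply Rmult_le_pos; [lra | apply pow2_ge_0] |].
    left; apply Rinv_0_lt_compat; nra. }
  apply Rmult_le_reg_r with (1 + e); [lra |].
  unfold Rdiv; rewrite Rmult_assoc, Rinv_l; lra.
Qed.

Lemma B_ge_of_Ustar_lt_1 : Ustar A B < 1 -> 19/50 <= B.
Proof.
  intros HU; destruct (Rle_lt_dec (19/50) B) as [| HBs]; [easy | exfalso].
  assert (Hmul : 2 * B * Cf A B * (A + B) * (Ustar A B - 1) =
                 2 * Cf A B * (1 - B^2) - sigma A B * (A + B)).
  { unfold Ustar, xstar, Pf, Cf in *; field; repeat split; nra. }
  assert (0 < 2 * B * Cf A B * (A + B)) by nra.
  assert (Hneg : 2 * Cf A B * (1 - B^2) < sigma A B * (A + B)) by nra.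
  pose proof (Cf_mul_one_sub_sqr_ge A B ltac:(lra) ltac:(lra)) as Hpoly.
  assert (Hle : sigma A B * (A + B) <= 2 * Cf A B * (1 - B^2)).
  { apply Rsqr_incr_0_var; [unfold Rsqr | nra].
    replace (sigma A B * (A + B) * (sigma A B * (A + B))) with (sigma A B ^ 2 * (A + B)^2)
      by ring.
    rewrite sigma_sqr; nra. }
  lra.
Qed.

Lemma Mf_Ustar : Mf A B (Ustar A B) = kappa A * xstar A B.
Proof. unfold Mf, Ustar; ring. Qed.

Lemma kappa_xstar_mul : 2 * B * Cf A B * (kappa A * xstar A B) = kappa A * sigma A B.
Proof. unfold xstar; field; lra. Qed.

Lemma B_mul_sqr_kappa_xstar_mul :
  2 * B * Cf A B ^ 2 * (B * (kappa A * xstar A B)^2) = (1 - A^2) * (1 + A*B).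
Proof.
  replace (2 * B * Cf A B ^ 2 * (B * (kappa A * xstar A B)^2))
    with ((2 * B * Cf A B * (kappa A * xstar A B))^2 / 2) by (field; lra).
  rewrite kappa_xstar_mul, Rpow_mult_distr, sigma_sqr, kappa_sqr by nra; field.
Qed.

Hypothesis HB0 : B0 A <= B.

Let kappa_mul_Cf_BA_le : kappa A * Cf B A <= B * (A + B).
Proof. exact (kappa_mul_Cf_le A B HA (proj1 HB) HB0). Qed.

Lemma kappa_xstar_bounds : 0 <= kappa A * xstar A B <= 1/2.
Proof.
  pose proof two_sigma_le; pose proof kappa_xstar_mul.
  pose proof (Cf_mul_Cf_ge A B ltac:(lra) ltac:(lra)).
  assert (Hk : 0 <= kappa A) by apply sqrt_pos.
  assert (Hks : kappa A * sigma A B <= B * Cf A B).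
  { apply Rmult_le_reg_r with (2 * Cf B A); [lra |].
    apply Rle_trans with (2 * sigma A B * (B * (A + B))).
    { replace (kappa A * sigma A B * (2 * Cf B A)) with (2 * sigma A B * (kappa A * Cf B A))
        by ring.
      apply Rmult_le_compat_l; lra. }
    assert (0 <= B * (A + B)) by nra.
    apply Rle_trans with (B * ((3 + A*B) * (A + B))); nra. }
  split; nra.
Qed.

Lemma G_minorant_le : G_minorant A B <= G A B (Ustar A B).
Proof.
  pose proof kappa_xstar_bounds as Hm; pose proof PI_sqr_le; pose proof PI2_3_2.
  unfold G_minorant, G; rewrite Mf_Ustar; set (m := kappa A * xstar A B) in *.
  assert (Hcm : 1 - (PI * m)^2/2 <= cos (PI * m)) by (apply cos_ge_quadratic; nra).
  assert (Hpm : (PI * m)^2 <= 21/2 * m^2)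
    by (rewrite Rpow_mult_distr; apply Rmult_le_compat_r; [apply pow2_ge_0 | lra]).
  assert (Hcm' : B * (1 - 21/4 * m^2) <= B * cos (PI * m))
    by (apply Rmult_le_compat_l; lra).
  pose proof (COS_bound (PI * Nf A B (Ustar A B))).
  rewrite sin_cos; replace (PI/2 + PI * (Ustar A B - 1/2)) with (PI * Ustar A B) by field.
  nra.
Qed.

Lemma G_minorant_nonneg_near_half : Ustar A B - 1/2 <= 1/4 -> 0 <= G_minorant A B.
Proof.
  intros Hu; unfold G_minorant; pose proof Ustar_ge_half; pose proof two_sigma_le.
  pose proof (sin_PI_mul_ge_linear (Ustar A B - 1/2) ltac:(lra)) as Hsin.
  pose proof (G_minorant_near_half_poly A B ltac:(lra) ltac:(lra)) as Hpoly.
  assert (Hsin' : (A + B) * (171/64 * (Ustar A B - 1/2)) <= (A + B) * sin (PI * (Ustar A B - 1/2)))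
    by (apply Rmult_le_compat_l; lra).
  enough (0 <= B - A - 21/4 * (B * (kappa A * xstar A B)^2) +
               171/64 * ((A + B) * (Ustar A B - 1/2))) by lra.
  apply (nonneg_of_pos_mul (4 * B * Cf A B ^ 2)); [nra |].
  replace (4 * B * Cf A B ^ 2 * (B - A - 21/4 * (B * (kappa A * xstar A B)^2) +
             171/64 * ((A + B) * (Ustar A B - 1/2))))
    with (4 * B * Cf A B ^ 2 * (B - A) - 21/2 * ((1 - A^2) * (1 + A*B)) +
          171/64 * Cf A B * (2 * Cf A B * Cf B A - 2 * sigma A B * (A + B)))
    by (rewrite <- B_mul_sqr_kappa_xstar_mul, <- Ustar_sub_half_mul; field).
  assert (0 <= Cf A B * ((A + B) * (3 + A*B - 2 * sigma A B)))
    by (apply Rmult_le_pos; [lra | apply Rmult_le_pos; lra]).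
  nra.
Qed.

Lemma G_minorant_nonneg_far : 19/50 <= B -> 1/4 <= Ustar A B - 1/2 <= 1/2 ->
  0 <= G_minorant A B.
Proof.
  intros HBs Hu; unfold G_minorant; pose proof (sin_PI_mul_ge_43_64 _ Hu).
  pose proof (G_minorant_far_poly A B ltac:(lra) ltac:(lra)) as Hpoly.
  assert (Hsq : (1 - A^2) * Cf B A ^ 2 <= B^2 * (A + B)^2).
  { rewrite <- (kappa_sqr A) by nra.
    assert (0 <= kappa A) by apply sqrt_pos.
    rewrite <- !Rpow_mult_distr.
    apply pow_incr; split; [nra | exact kappa_mul_Cf_BA_le]. }
  enough (0 <= B - A - 21/4 * (B * (kappa A * xstar A B)^2) + 43/64 * (A + B)) by nra.
  apply (nonneg_of_pos_mul (2 * B * Cf A B ^ 2)); [nra |].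
  replace (2 * B * Cf A B ^ 2 * (B - A - 21/4 * (B * (kappa A * xstar A B)^2) + 43/64 * (A + B)))
    with (2 * B * Cf A B ^ 2 * (B - A + 43/64 * (A + B)) - 21/4 * ((1 - A^2) * (1 + A*B)))
    by (rewrite <- B_mul_sqr_kappa_xstar_mul; field).
  lra.
Qed.

End Ustar.

Theorem mainTheorem8 (A B : R) :
  0 < A <= 1 -> 0 < B <= 1 -> B >= B0 A ->
  let C := 2 + A*B - A^2 in
  let sigma := sqrt (2 * (1 + A*B)) in
  let xs := sigma / (2 * B * C) in
  let Us := Pf A B - xs in
  Us >= 1/2 /\ (Us < Rf A B -> G A B Us >= 0).
Proof.
  intros HA HB HB0.
  change (Ustar A B >= 1/2 /\ (Ustar A B < Rf A B -> G A B (Ustar A B) >= 0)).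
  pose proof (Ustar_ge_half A B HA HB) as Hhalf.
  split; [lra | intros HR].
  assert (HU1 : Ustar A B < 1) by (pose proof (Rf_le_1 A B HA HB); lra).
  pose proof (B_ge_of_Ustar_lt_1 A B HA HB HU1) as HBs.
  pose proof (G_minorant_le A B HA HB ltac:(lra)) as HG.
  destruct (Rle_lt_dec (Ustar A B - 1/2) (1/4)) as [Hu | Hu].
  - pose proof (G_minorant_nonneg_near_half A B HA HB Hu); lra.
  - pose proof (G_minorant_nonneg_far A B HA HB ltac:(lra) HBs ltac:(lra)); lra.
Qed.
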